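(* Assume $p\in W^{1,\infty}((0,\infty)\times\mathbb{R})$ satisfies $p_*\mathbb{1}_{\{s>s_*\}}\le p(s,S)\le p_\infty$ for all $s\ge0$, $S\in\mathbb{R}$, for some constants $p_*,p_\infty,s_*>0$. Then the function $F:\mathbb{R}\to\mathbb{R}_+$ defined by $$F(S)=\left(\int_0^\infty e^{-\int_0^sp(\tau,S)\,d\tau}\,ds\right)^{-1}$$ is bounded and Lipschitz. *)

From Stdlib Require Import Reals.
From Coquelicot Require Import Coquelicot.
Open Scope R_scope.

Definition ind_gt (sstar s : R) : R := if Rlt_dec sstar s then 1 else 0.

Definition expfac (p : R -> R -> R) (S s : R) : R :=
  exp (- RInt (fun tau => p tau S) 0 s).

Definition F (p : R -> R -> R) (S : R) : R :=
  / RInt_gen (expfac p S) (at_point 0) (Rbar_locally p_infty).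

(* p in W^{1,oo}((0,oo) x R), taken as its (Lipschitz) continuous representative:
   bounded and Lipschitz on (0,oo) x R. *)
Definition W1inf (p : R -> R -> R) : Prop :=
  (exists M, forall s S, 0 < s -> Rabs (p s S) <= M) /\
  (exists L, forall s1 s2 S1 S2, 0 < s1 -> 0 < s2 ->
      Rabs (p s1 S1 - p s2 S2) <= L * (Rabs (s1 - s2) + Rabs (S1 - S2))).

(* Write A(S, s) for the integral of p(., S) over [0, s].  The bounds on p give
   p_* (s - s_* ) <= A(S, s) <= p_oo s, so the integrand e^{-A(S, s)} is at least
   e^{-p_oo} on [0, 1] and at most e^{p_* s_* } e^{-p_* s}: the improper integral
   defining 1/F(S) exists (its partial integrals increase and stay bounded) and is
   at least e^{-p_oo}, whence F <= e^{p_oo}.  The Lipschitz bound of p in S gives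
   |A(S1, s) - A(S2, s)| <= L s |S1 - S2|, hence a bound
   C s e^{-p_* s} |S1 - S2| on the difference of the integrands, which is
   integrable in s; as both integrals are at least e^{-p_oo}, passing to the
   inverses costs a factor e^{2 p_oo}. *)

From Stdlib Require Import Reals Lra Classical.
From Coquelicot Require Import Coquelicot.
Open Scope R_scope.

Lemma exp_le_compat x y : x <= y -> exp x <= exp y.
Proof. intros [Hlt | ->]; [now apply Rlt_le, exp_increasing | apply Rle_refl]. Qed.

Lemma Rabs_exp_opp_sub_le a b :
  Rabs (exp (- a) - exp (- b)) <= exp (- Rmin a b) * Rabs (a - b).
Proof.
  assert (Hle : forall a b, a <= b -> Rabs (exp (- a) - exp (- b)) <= exp (- a) * (b - a)).
  { clear a b. intros a b Hab.
    assert (Hsplit : exp (- b) = exp (- a) * exp (- (b - a))).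
    { rewrite <- exp_plus. f_equal. ring. }
    assert (exp (- b) <= exp (- a)) by (apply exp_le_compat; lra).
    pose proof (exp_ineq1_le (- (b - a))). pose proof (exp_pos (- a)).
    rewrite Rabs_pos_eq by lra. nra. }
  destruct (Rle_dec a b) as [Hab | Hab].
  - rewrite Rmin_left, (Rabs_minus_sym a b), (Rabs_pos_eq (b - a)) by lra. now apply Hle.
  - rewrite Rmin_right, (Rabs_minus_sym (exp (- a))), (Rabs_pos_eq (a - b)) by lra.
    apply Hle. lra.
Qed.

Lemma mul_exp_opp_le c s :
  0 < c -> 0 <= s -> s * exp (- (c * s)) <= 2 / c * exp (- (c / 2 * s)).
Proof.
  intros Hc Hs.
  assert (Hsplit : exp (- (c * s)) = exp (- (c / 2 * s)) * exp (- (c / 2 * s))).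
  { rewrite <- exp_plus. f_equal. field. }
  assert (Hinv : exp (c / 2 * s) * exp (- (c / 2 * s)) = 1).
  { rewrite <- exp_plus, Rplus_opp_r. apply exp_0. }
  assert (Hbound : s * exp (- (c / 2 * s)) <= 2 / c).
  { pose proof (exp_ineq1_le (c / 2 * s)). pose proof (exp_pos (- (c / 2 * s))).
    apply Rmult_le_reg_l with (c / 2); [lra |].
    replace (c / 2 * (2 / c)) with 1 by (field; lra). nra. }
  rewrite Hsplit. pose proof (exp_pos (- (c / 2 * s))). nra.
Qed.

Lemma Rabs_Rinv_sub_le m x y :
  0 < m -> m <= x -> m <= y -> Rabs (/ x - / y) <= Rabs (x - y) / (m * m).
Proof.
  intros Hm Hx Hy.
  replace (/ x - / y) with ((y - x) / (x * y)) by (field; lra).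
  unfold Rdiv. rewrite Rabs_mult, Rabs_inv, (Rabs_pos_eq (x * y)), Rabs_minus_sym by nra.
  apply Rmult_le_compat_l; [apply Rabs_pos |].
  apply Rinv_le_contravar; [nra | apply Rmult_le_compat; lra].
Qed.

Lemma lipschitz_continuous (g : R -> R) (K : R) :
  (forall u v, Rabs (g u - g v) <= K * Rabs (u - v)) -> forall x, continuous g x.
Proof.
  intros Hg x. apply filterlim_locally. intro eps.
  assert (HK : 0 < Rabs K + 1) by (pose proof (Rabs_pos K); lra).
  assert (Hd : 0 < eps / (Rabs K + 1)) by (apply Rdiv_lt_0_compat; [apply cond_pos | lra]).
  exists (mkposreal _ Hd). intros u Hu. change (Rabs (g u - g x) < eps).
  change (Rabs (u - x) < eps / (Rabs K + 1)) in Hu.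
  apply Rle_lt_trans with ((Rabs K + 1) * Rabs (u - x)).
  - pose proof (Rle_abs K). pose proof (Rabs_pos (u - x)). specialize (Hg u x). nra.
  - apply Rmult_lt_reg_r with (/ (Rabs K + 1)); [apply Rinv_0_lt_compat; lra |].
    replace ((Rabs K + 1) * Rabs (u - x) * / (Rabs K + 1)) with (Rabs (u - x)) by (field; lra).
    exact Hu.
Qed.

Lemma filterlim_nondecreasing_bounded (g : R -> R) K :
  (forall a b, 0 <= a <= b -> g a <= g b) -> (forall b, 0 <= b -> g b <= K) ->
  exists l, filterlim g (Rbar_locally p_infty) (locally l).
Proof.
  intros Hmono HK.
  destruct (completeness (fun x => exists b, 0 <= b /\ x = g b)) as [l [Hub Hlub]].
  - exists K. intros x [b [Hb ->]]. now apply HK.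
  - exists (g 0), 0. split; [lra | reflexivity].
  - exists l. apply filterlim_locally. intro eps.
    assert (Happrox : exists b0, 0 <= b0 /\ l - eps < g b0).
    { apply NNPP. intro Hno.
      assert (l <= l - eps).
      { apply Hlub. intros x [b [Hb ->]]. apply Rnot_lt_le. intro Hlt. apply Hno. now exists b. }
      pose proof (cond_pos eps). lra. }
    destruct Happrox as [b0 [Hb0 Hgb0]].
    exists b0. intros b Hb. change (Rabs (g b - l) < eps).
    assert (g b <= l) by (apply Hub; exists b; split; [lra | reflexivity]).
    pose proof (Hmono b0 b ltac:(lra)). apply Rabs_def1; lra.
Qed.

Lemma lim_Rabs_sub_le {T : Type} {F : (T -> Prop) -> Prop} {FF : ProperFilter' F}
  (g1 g2 : T -> R) l1 l2 C :
  filterlim g1 F (locally l1) -> filterlim g2 F (locally l2) ->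
  F (fun x => Rabs (g1 x - g2 x) <= C) -> Rabs (l1 - l2) <= C.
Proof.
  intros H1 H2 HC.
  assert (Hdiff : filterlim (fun x => Rabs (g1 x - g2 x)) F (locally (Rabs (l1 - l2)))).
  { apply (filterlim_comp _ _ _ (fun x => g1 x - g2 x) Rabs _ (locally (l1 - l2)));
      [| apply continuous_Rabs].
    apply (filterlim_comp_2 (H := locally (opp l2)) g1 (fun x => opp (g2 x)) plus H1).
    - exact (filterlim_comp _ _ _ g2 opp _ _ _ H2 (filterlim_opp l2)).
    - exact (filterlim_plus l1 (opp l2)). }
  exact (filterlim_le (fun x => Rabs (g1 x - g2 x)) (fun _ => C) (Rabs (l1 - l2)) C
           HC Hdiff (filterlim_const C)).
Qed.

Lemma is_RInt_exp_opp_mul c b :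
  c <> 0 -> is_RInt (fun s => exp (- (c * s))) 0 b ((1 - exp (- (c * b))) / c).
Proof.
  intro Hc.
  replace ((1 - exp (- (c * b))) / c)
    with (minus (- exp (- (c * b)) / c) (- exp (- (c * 0)) / c))
    by (unfold minus, plus, opp; simpl; rewrite Rmult_0_r, Ropp_0, exp_0; field; exact Hc).
  apply (is_RInt_derive (fun s => - exp (- (c * s)) / c)).
  - intros x _. auto_derive; [exact I | field; exact Hc].
  - intros x _. apply (ex_derive_continuous (K := R_AbsRing) (V := R_NormedModule)).
    auto_derive. exact I.
Qed.

Lemma abs_RInt_le_exp_decay (f : R -> R) K c b :
  0 < c -> 0 <= K -> 0 <= b -> ex_RInt f 0 b ->
  (forall x, 0 < x < b -> Rabs (f x) <= K * exp (- (c * x))) ->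
  Rabs (RInt f 0 b) <= K / c.
Proof.
  intros Hc HK Hb Hf Hdecay.
  assert (Hint : is_RInt (fun x => K * exp (- (c * x))) 0 b (K * ((1 - exp (- (c * b))) / c)))
    by exact (is_RInt_scal _ 0 b K _ (is_RInt_exp_opp_mul c b ltac:(lra))).
  eapply Rle_trans; [now apply abs_RInt_le |].
  eapply Rle_trans.
  - apply (RInt_le _ (fun x => K * exp (- (c * x)))); [exact Hb | | eexists; exact Hint | exact Hdecay].
    exact (ex_RInt_norm f 0 b Hf).
  - rewrite (is_RInt_unique _ _ _ _ Hint). change (scal K ?x) with (K * x).
    pose proof (exp_pos (- (c * b))).
    apply Rmult_le_reg_r with c; [exact Hc |].
    replace (K * ((1 - exp (- (c * b))) / c) * c) with (K - K * exp (- (c * b))) by (field; lra).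
    replace (K / c * c) with K by (field; lra). nra.
Qed.

Lemma RInt_0_nondecreasing (f : R -> R) a b :
  (forall a b, 0 <= a <= b -> ex_RInt f a b) -> (forall x, 0 < x -> 0 <= f x) ->
  0 <= a <= b -> RInt f 0 a <= RInt f 0 b.
Proof.
  intros Hex Hpos Hab.
  rewrite <- (RInt_Chasles f 0 a b) by (apply Hex; lra).
  assert (0 <= RInt f a b).
  { apply RInt_ge_0; [lra | apply Hex; lra | intros x Hx; apply Hpos; lra]. }
  change (plus ?x ?y) with (x + y). lra.
Qed.

Lemma is_RInt_gen_of_lim_RInt (f : R -> R) l :
  (forall b, 0 <= b -> ex_RInt f 0 b) ->
  filterlim (fun b => RInt f 0 b) (Rbar_locally p_infty) (locally l) ->
  is_RInt_gen f (at_point 0) (Rbar_locally p_infty) l.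
Proof.
  intros Hex Hlim.
  apply (filterlimi_lim_ext_loc (fun ab => RInt f (fst ab) (snd ab))).
  - exists (fun a => a = 0) (fun b => 0 < b); [reflexivity | exists 0; intros; lra |].
    intros a b -> Hb. simpl. apply (RInt_correct (V := R_CompleteNormedModule)). apply Hex. lra.
  - intros P [eps HP]. destruct (Hlim _ (locally_ball l eps)) as [M HM].
    exists (fun a => a = 0) (fun b => M < b); [reflexivity | now exists M |].
    intros a b -> Hb. apply HP, HM, Hb.
Qed.

(* The rate p(., S) is only controlled for s > 0, while integrability on [0, b]
   requires continuity on the closed interval; we therefore extend through the
   limit at 0+, which leaves every integral over [0, b] unchanged. *)
Section LipschitzOnPositives.

Variables (f : R -> R) (L : R).
Hypothesis L_ge0 : 0 <= L.
Hypothesis f_lip : forall u v, 0 < u -> 0 < v -> Rabs (f u - f v) <= L * Rabs (u - v).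

Lemma lipschitz_pos_right_limit : exists y, filterlim f (at_right 0) (locally y).
Proof.
  apply (filterlim_locally_cauchy (F := at_right 0) f). intro eps.
  assert (Hd : 0 < eps / (L + 1)) by (apply Rdiv_lt_0_compat; [apply cond_pos | lra]).
  exists (fun u => 0 < u < eps / (L + 1)). split.
  - exists (mkposreal _ Hd). intros u Hu Hu0. change (Rabs (u - 0) < eps / (L + 1)) in Hu.
    rewrite Rminus_0_r, Rabs_pos_eq in Hu by lra. lra.
  - intros u v [Hu0 Hu] [Hv0 Hv]. change (Rabs (f v - f u) < eps).
    apply Rle_lt_trans with (L * (eps / (L + 1))).
    + eapply Rle_trans; [apply f_lip; lra |].
      apply Rmult_le_compat_l; [lra | apply Rabs_le; lra].
    + apply Rmult_lt_reg_r with (L + 1); [lra |].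
      replace (L * (eps / (L + 1)) * (L + 1)) with (L * eps) by (field; lra).
      pose proof (cond_pos eps). nra.
Qed.

Lemma lipschitz_pos_right_limit_dist y :
  filterlim f (at_right 0) (locally y) -> forall u, 0 < u -> Rabs (f u - y) <= L * u.
Proof.
  intros Hy u Hu.
  assert (Hl : filterlim (fun v => Rabs (f u - f v)) (at_right 0) (locally (Rabs (f u - y)))).
  { apply (filterlim_comp _ _ _ f (fun w => Rabs (f u - w)) _ (locally y) _ Hy).
    apply continuous_Rabs_comp, (continuous_minus (fun _ => f u) (fun w => w)).
    - apply continuous_const.
    - apply continuous_id. }
  assert (Hr : filterlim (fun v => L * Rabs (u - v)) (at_right 0) (locally (L * u))).
  { apply (filterlim_filter_le_1 (F := locally 0)).
    - intros P [d Hd]. exists d. intros v Hv _. now apply Hd.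
    - replace (L * u) with (L * Rabs (u - 0)) by (rewrite Rminus_0_r, Rabs_pos_eq; lra).
      apply (continuous_mult (fun _ => L) (fun v => Rabs (u - v))).
      + apply continuous_const.
      + apply continuous_Rabs_comp, (continuous_minus (fun _ => u) (fun v => v)).
        * apply continuous_const.
        * apply continuous_id. }
  assert (Hle : Rbar_le (Rabs (f u - y)) (L * u)).
  { apply (filterlim_le (F := at_right 0) (fun v => Rabs (f u - f v))
      (fun v => L * Rabs (u - v)) (Rabs (f u - y)) (L * u)); [| exact Hl | exact Hr].
    exists (mkposreal 1 Rlt_0_1). intros v _ Hv. now apply f_lip. }
  exact Hle.
Qed.

Lemma lipschitz_pos_extension :
  exists g, (forall u, 0 < u -> g u = f u) /\ forall x, continuous g x.
Proof.
  destruct lipschitz_pos_right_limit as [y Hy].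
  pose proof (lipschitz_pos_right_limit_dist y Hy) as Hdist.
  exists (fun u => if Rlt_dec 0 u then f u else y). split.
  - intros u Hu. destruct (Rlt_dec 0 u); [reflexivity | lra].
  - apply (lipschitz_continuous _ L). intros u v.
    destruct (Rlt_dec 0 u) as [Hu | Hu]; destruct (Rlt_dec 0 v) as [Hv | Hv].
    + now apply f_lip.
    + eapply Rle_trans; [now apply Hdist |].
      apply Rmult_le_compat_l; [lra | unfold Rabs; destruct Rcase_abs; lra].
    + rewrite Rabs_minus_sym. eapply Rle_trans; [now apply Hdist |].
      apply Rmult_le_compat_l; [lra | unfold Rabs; destruct Rcase_abs; lra].
    + rewrite Rminus_eq_0, Rabs_R0. apply Rmult_le_pos; [lra | apply Rabs_pos].
Qed.

Lemma ex_RInt_lipschitz_pos a b : 0 <= a <= b -> ex_RInt f a b.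
Proof.
  intro Hab. destruct lipschitz_pos_extension as [g [Hgf Hg]].
  apply (ex_RInt_ext g).
  - intros x Hx. rewrite Rmin_left in Hx by lra. apply Hgf. lra.
  - apply (ex_RInt_continuous (V := R_CompleteNormedModule)). intros z _. apply Hg.
Qed.

Lemma ex_RInt_comp_RInt_lipschitz_pos (phi : R -> R) a b :
  (forall x, continuous phi x) -> 0 <= a <= b -> ex_RInt (fun s => phi (RInt f 0 s)) a b.
Proof.
  intros Hphi Hab. destruct lipschitz_pos_extension as [g [Hgf Hg]].
  apply (ex_RInt_ext (fun s => phi (RInt g 0 s))).
  - intros s Hs. rewrite Rmin_left, Rmax_right in Hs by lra. f_equal.
    apply RInt_ext. intros t Ht. rewrite Rmin_left, Rmax_right in Ht by lra.
    apply Hgf. lra.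
  - apply (ex_RInt_continuous (V := R_CompleteNormedModule)). intros z _.
    apply (continuous_comp (fun s => RInt g 0 s) phi); [| apply Hphi].
    apply (ex_derive_continuous (K := R_AbsRing) (V := R_NormedModule)).
    auto_derive. split; [| split; [| exact I]].
    + apply (ex_RInt_continuous (V := R_CompleteNormedModule)). intros x _. apply Hg.
    + apply filter_forall. intro x. apply continuity_pt_filterlim, Hg.
Qed.

End LipschitzOnPositives.

Section CumulativeRate.

Variables (p : R -> R -> R) (pstar pinf sstar L : R).
Hypotheses (pstar_gt0 : 0 < pstar) (sstar_ge0 : 0 <= sstar) (L_ge0 : 0 <= L).
Hypothesis p_bounds : forall s S, 0 <= s ->
  pstar * ind_gt sstar s <= p s S /\ p s S <= pinf.
Hypothesis p_lip : forall s1 s2 S1 S2, 0 < s1 -> 0 < s2 ->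
  Rabs (p s1 S1 - p s2 S2) <= L * (Rabs (s1 - s2) + Rabs (S1 - S2)).

Let cum_rate S s := RInt (fun tau => p tau S) 0 s.

Lemma p_range s S : 0 <= s -> 0 <= p s S <= pinf.
Proof.
  intro Hs. destruct (p_bounds s S Hs) as [Hlow Hup]. unfold ind_gt in Hlow.
  destruct (Rlt_dec sstar s); lra.
Qed.

Lemma p_ge_pstar s S : sstar < s -> pstar <= p s S.
Proof.
  intro Hs. destruct (p_bounds s S ltac:(lra)) as [Hlow _]. unfold ind_gt in Hlow.
  destruct (Rlt_dec sstar s); lra.
Qed.

Lemma p_lip_time S u v : 0 < u -> 0 < v -> Rabs (p u S - p v S) <= L * Rabs (u - v).
Proof.
  intros Hu Hv. pose proof (p_lip u v S S Hu Hv) as H.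
  rewrite Rminus_eq_0, Rabs_R0, Rplus_0_r in H. exact H.
Qed.

Lemma p_lip_state s S1 S2 : 0 < s -> Rabs (p s S1 - p s S2) <= L * Rabs (S1 - S2).
Proof.
  intro Hs. pose proof (p_lip s s S1 S2 Hs Hs) as H.
  rewrite Rminus_eq_0, Rabs_R0, Rplus_0_l in H. exact H.
Qed.

Lemma ex_RInt_p S a b : 0 <= a <= b -> ex_RInt (fun t => p t S) a b.
Proof. apply (ex_RInt_lipschitz_pos _ L L_ge0), p_lip_time. Qed.

Lemma cum_rate_range S s : 0 <= s -> 0 <= cum_rate S s <= pinf * s.
Proof.
  intro Hs. split.
  - apply RInt_ge_0; [lra | apply ex_RInt_p; lra | intros t Ht; apply p_range; lra].
  - rewrite <- (Rminus_0_r s) at 2. rewrite Rmult_comm.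
    eapply Rle_trans; [apply Rle_abs |].
    apply abs_RInt_le_const; [lra | apply ex_RInt_p; lra |].
    intros t Ht. rewrite Rabs_pos_eq; apply p_range; lra.
Qed.

Lemma cum_rate_ge S s : 0 <= s -> pstar * (s - sstar) <= cum_rate S s.
Proof.
  intro Hs. destruct (Rle_dec s sstar) as [Hle | Hgt].
  - pose proof (cum_rate_range S s Hs). nra.
  - unfold cum_rate. rewrite <- (RInt_Chasles _ 0 sstar s) by (apply ex_RInt_p; lra).
    change (plus ?x ?y) with (x + y).
    assert (Hhead : 0 <= RInt (fun t => p t S) 0 sstar) by apply (cum_rate_range S sstar sstar_ge0).
    assert (Htail : RInt (fun _ => pstar) sstar s <= RInt (fun t => p t S) sstar s).
    { apply RInt_le; [lra | apply ex_RInt_const | apply ex_RInt_p; lra |].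
      intros t Ht. apply p_ge_pstar. lra. }
    rewrite RInt_const in Htail. change (scal ?x ?y) with (x * y) in Htail. lra.
Qed.

Lemma cum_rate_lip_state S1 S2 s : 0 <= s ->
  Rabs (cum_rate S1 s - cum_rate S2 s) <= s * (L * Rabs (S1 - S2)).
Proof.
  intro Hs. unfold cum_rate.
  assert (Hex : ex_RInt (fun t => p t S1 - p t S2) 0 s).
  { exact (ex_RInt_minus _ _ 0 s (ex_RInt_p S1 0 s ltac:(lra)) (ex_RInt_p S2 0 s ltac:(lra))). }
  rewrite <- (RInt_minus (fun t => p t S1) (fun t => p t S2)) by (apply ex_RInt_p; lra).
  eapply Rle_trans; [apply abs_RInt_le; [lra | exact Hex] |].
  eapply Rle_trans.
  - apply (RInt_le _ (fun _ => L * Rabs (S1 - S2))); [lra | | apply ex_RInt_const |].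
    + exact (ex_RInt_norm _ 0 s Hex).
    + intros t Ht. apply p_lip_state. lra.
  - rewrite RInt_const, Rminus_0_r. apply Rle_refl.
Qed.

Lemma ex_RInt_expfac S a b : 0 <= a <= b -> ex_RInt (expfac p S) a b.
Proof.
  apply (ex_RInt_comp_RInt_lipschitz_pos _ L L_ge0 (p_lip_time S) (fun x => exp (- x))).
  intro x. apply (ex_derive_continuous (K := R_AbsRing) (V := R_NormedModule)).
  auto_derive. exact I.
Qed.

Lemma expfac_le S s : 0 <= s -> expfac p S s <= exp (pstar * sstar) * exp (- (pstar * s)).
Proof.
  intro Hs. unfold expfac. rewrite <- exp_plus. apply exp_le_compat.
  pose proof (cum_rate_ge S s Hs). unfold cum_rate in *. lra.
Qed.

Lemma expfac_ge S s : 0 <= s <= 1 -> exp (- pinf) <= expfac p S s.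
Proof.
  intro Hs. unfold expfac. apply exp_le_compat.
  pose proof (cum_rate_range S s ltac:(lra)). pose proof (p_range 0 S (Rle_refl 0)).
  unfold cum_rate in *. nra.
Qed.

(* Half of the exponential decay absorbs the factor s from [cum_rate_lip_state]. *)
Lemma expfac_lip_state S1 S2 s : 0 <= s ->
  Rabs (expfac p S1 s - expfac p S2 s)
    <= 2 / pstar * exp (pstar * sstar) * (L * Rabs (S1 - S2)) * exp (- (pstar / 2 * s)).
Proof.
  intro Hs. unfold expfac. eapply Rle_trans; [apply Rabs_exp_opp_sub_le |].
  fold (cum_rate S1 s) (cum_rate S2 s).
  assert (Hmin : exp (- Rmin (cum_rate S1 s) (cum_rate S2 s))
                   <= exp (pstar * sstar) * exp (- (pstar * s))).
  { rewrite <- exp_plus. apply exp_le_compat.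
    pose proof (cum_rate_ge S1 s Hs). pose proof (cum_rate_ge S2 s Hs).
    apply Rmin_case; lra. }
  pose proof (cum_rate_lip_state S1 S2 s Hs) as Hdiff.
  pose proof (mul_exp_opp_le pstar s pstar_gt0 Hs) as Hdecay.
  assert (HK : 0 <= exp (pstar * sstar) * (L * Rabs (S1 - S2))).
  { pose proof (exp_pos (pstar * sstar)). pose proof (Rabs_pos (S1 - S2)).
    apply Rmult_le_pos; [lra | now apply Rmult_le_pos]. }
  apply Rle_trans with (exp (pstar * sstar) * exp (- (pstar * s)) * (s * (L * Rabs (S1 - S2)))).
  - apply Rmult_le_compat; [apply Rlt_le, exp_pos | apply Rabs_pos | exact Hmin | exact Hdiff].
  - replace (exp (pstar * sstar) * exp (- (pstar * s)) * (s * (L * Rabs (S1 - S2))))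
      with (exp (pstar * sstar) * (L * Rabs (S1 - S2)) * (s * exp (- (pstar * s)))) by ring.
    replace (2 / pstar * exp (pstar * sstar) * (L * Rabs (S1 - S2)) * exp (- (pstar / 2 * s)))
      with (exp (pstar * sstar) * (L * Rabs (S1 - S2)) * (2 / pstar * exp (- (pstar / 2 * s))))
      by ring.
    now apply Rmult_le_compat_l.
Qed.

Lemma RInt_expfac_le S b : 0 <= b -> RInt (expfac p S) 0 b <= exp (pstar * sstar) / pstar.
Proof.
  intro Hb. eapply Rle_trans; [apply Rle_abs |].
  apply abs_RInt_le_exp_decay; [exact pstar_gt0 | apply Rlt_le, exp_pos | exact Hb | |].
  - apply ex_RInt_expfac. lra.
  - intros s Hs. unfold expfac at 1. rewrite Rabs_pos_eq by apply Rlt_le, exp_pos.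
    apply expfac_le. lra.
Qed.

Lemma RInt_expfac_lip_state S1 S2 b : 0 <= b ->
  Rabs (RInt (expfac p S1) 0 b - RInt (expfac p S2) 0 b)
    <= 4 / (pstar * pstar) * exp (pstar * sstar) * L * Rabs (S1 - S2).
Proof.
  intro Hb.
  assert (Hex : ex_RInt (fun s => expfac p S1 s - expfac p S2 s) 0 b).
  { exact (ex_RInt_minus _ _ 0 b (ex_RInt_expfac S1 0 b ltac:(lra))
                                  (ex_RInt_expfac S2 0 b ltac:(lra))). }
  rewrite <- (RInt_minus (expfac p S1) (expfac p S2)) by (apply ex_RInt_expfac; lra).
  replace (4 / (pstar * pstar) * exp (pstar * sstar) * L * Rabs (S1 - S2))
    with (2 / pstar * exp (pstar * sstar) * (L * Rabs (S1 - S2)) / (pstar / 2))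
    by (field; lra).
  apply abs_RInt_le_exp_decay; [lra | | exact Hb | exact Hex |].
  - pose proof (exp_pos (pstar * sstar)). pose proof (Rabs_pos (S1 - S2)).
    apply Rmult_le_pos; [apply Rmult_le_pos; [apply Rlt_le, Rdiv_lt_0_compat | ] | ]; nra.
  - intros s Hs. apply expfac_lip_state. lra.
Qed.

Lemma lim_RInt_expfac S : exists l, exp (- pinf) <= l /\ F p S = / l /\
  filterlim (fun b => RInt (expfac p S) 0 b) (Rbar_locally p_infty) (locally l).
Proof.
  assert (Hmono : forall a b, 0 <= a <= b -> RInt (expfac p S) 0 a <= RInt (expfac p S) 0 b).
  { intros a b Hab. apply RInt_0_nondecreasing; [exact (ex_RInt_expfac S) | | exact Hab].
    intros x _. apply Rlt_le, exp_pos. }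
  destruct (filterlim_nondecreasing_bounded _ _ Hmono (RInt_expfac_le S)) as [l Hl].
  exists l. split; [| split; [| exact Hl]].
  - apply (filterlim_le (F := Rbar_locally p_infty) (fun _ => exp (- pinf))
      (fun b => RInt (expfac p S) 0 b) (exp (- pinf)) l); [| apply filterlim_const | exact Hl].
    exists 1. intros b Hb. apply Rle_trans with (RInt (expfac p S) 0 1); [| apply Hmono; lra].
    replace (exp (- pinf)) with (RInt (fun _ => exp (- pinf)) 0 1)
      by (rewrite RInt_const, Rminus_0_r; exact (scal_one (exp (- pinf)))).
    apply RInt_le; [lra | apply ex_RInt_const | apply ex_RInt_expfac; lra |].
    intros s Hs. apply expfac_ge. lra.
  - unfold F. rewrite (is_RInt_gen_unique _ l); [reflexivity |].
    apply is_RInt_gen_of_lim_RInt; [intros b Hb; apply ex_RInt_expfac; lra | exact Hl].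
Qed.

Lemma F_bounded S : Rabs (F p S) <= exp pinf.
Proof.
  destruct (lim_RInt_expfac S) as [l [Hl [-> _]]].
  pose proof (exp_pos (- pinf)).
  rewrite Rabs_pos_eq by (apply Rlt_le, Rinv_0_lt_compat; lra).
  rewrite <- (Rinv_inv (exp pinf)), <- exp_Ropp.
  apply Rinv_le_contravar; lra.
Qed.

Lemma F_lipschitz S1 S2 : Rabs (F p S1 - F p S2)
  <= 4 / (pstar * pstar) * exp (pstar * sstar + 2 * pinf) * L * Rabs (S1 - S2).
Proof.
  destruct (lim_RInt_expfac S1) as [l1 [Hl1 [-> Hlim1]]].
  destruct (lim_RInt_expfac S2) as [l2 [Hl2 [-> Hlim2]]].
  assert (Hdiff : Rabs (l1 - l2) <= 4 / (pstar * pstar) * exp (pstar * sstar) * L * Rabs (S1 - S2)).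
  { apply (lim_Rabs_sub_le _ _ _ _ _ Hlim1 Hlim2). exists 0. intros b Hb.
    apply RInt_expfac_lip_state. lra. }
  set (m := exp (- pinf)) in *. assert (Hm : 0 < m) by apply exp_pos.
  assert (Hexp : exp (pstar * sstar + 2 * pinf) = exp (pstar * sstar) / (m * m)).
  { unfold m, Rdiv. rewrite exp_plus. f_equal. rewrite <- exp_plus, <- exp_Ropp. f_equal. ring. }
  eapply Rle_trans; [apply (Rabs_Rinv_sub_le m); assumption |].
  rewrite Hexp.
  replace (4 / (pstar * pstar) * (exp (pstar * sstar) / (m * m)) * L * Rabs (S1 - S2))
    with (4 / (pstar * pstar) * exp (pstar * sstar) * L * Rabs (S1 - S2) / (m * m))
    by (field; lra).
  apply Rmult_le_compat_r; [apply Rlt_le, Rinv_0_lt_compat; nra | exact Hdiff].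
Qed.

End CumulativeRate.

Theorem mainTheorem5 (p : R -> R -> R) (pstar pinf sstar : R)
  (hpstar : 0 < pstar) (hpinf : 0 < pinf) (hsstar : 0 < sstar)
  (hW : W1inf p)
  (hbounds : forall s S, 0 <= s ->
     pstar * ind_gt sstar s <= p s S /\ p s S <= pinf) :
  (exists M, forall S, Rabs (F p S) <= M) /\
  (exists L, forall S1 S2, Rabs (F p S1 - F p S2) <= L * Rabs (S1 - S2)).
Proof.
  destruct hW as [_ [L0 HL0]].
  set (L := Rmax L0 0).
  assert (HL : 0 <= L) by apply Rmax_r.
  assert (Hlip : forall s1 s2 S1 S2, 0 < s1 -> 0 < s2 ->
            Rabs (p s1 S1 - p s2 S2) <= L * (Rabs (s1 - s2) + Rabs (S1 - S2))).
  { intros s1 s2 S1 S2 Hs1 Hs2. eapply Rle_trans; [now apply HL0 |].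
    apply Rmult_le_compat_r; [| apply Rmax_l].
    pose proof (Rabs_pos (s1 - s2)). pose proof (Rabs_pos (S1 - S2)). lra. }
  split.
  - exists (exp pinf). intro S.
    exact (F_bounded p pstar pinf sstar L hpstar (Rlt_le _ _ hsstar) HL hbounds Hlip S).
  - eexists. intros S1 S2.
    exact (F_lipschitz p pstar pinf sstar L hpstar (Rlt_le _ _ hsstar) HL hbounds Hlip S1 S2).
Qed.
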